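(* Let $I=(\mathcal{M},[N],(d_i)_{i\in[N]})$ be a non-positive instance with $\mathcal{M}\ne\emptyset$, and let $(S_1,\ldots,S_N)$ be the allocation produced by the round-robin protocol in which agents pick in the order $1,2,\dots,N,1,2,\dots,N,\dots$ and at her turn agent $i$ receives an unallocated item $j$ maximizing $d_i(j)$ (i.e. of least disutility; ties broken arbitrarily), until all items are allocated. Then for all $i\in[N]$, $$d_i(S_i)\ge\Big(2-\frac1N\Big)\cdot MmS_{d_i}^N(\mathcal{M}),$$ and the constant $2-\frac1N$ cannot be improved in general: for every $N\ge 1$ there is a non-positive instance with $N$ agents where equality holds for some agent with $MmS_{d_i}^N(\mathcal{M})<0$.
   Context: A non-positive instance: finite item set $\mathcal{M}$, agents $[N]=\{1,\dots,N\}$, additive utilities $d_i$ with $d_i(j)\le0$ for all items (chores). $\Pi_N(\mathcal{M})$ is the set of ordered $N$-partitions of $\mathcal{M}$ (parts may be empty); $MmS_{d}^N(\mathcal{M}):=\max_{(T_1,\ldots,T_N)\in\Pi_N(\mathcal{M})}\min_{j} d(T_j)$. *)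

From HB Require Import structures.
From mathcomp Require Import all_boot all_order all_algebra.
Set Implicit Arguments. Unset Strict Implicit. Unset Printing Implicit Defensive.
Import Order.TTheory GRing.Theory Num.Theory.
Local Open Scope ring_scope.

Section Defs.
Variable R : realFieldType.

(* minimum / maximum of F over a finite type I (default 0 only if I is empty,
   which never happens in our uses) *)
Definition minover (I : finType) (F : I -> R) : R :=
  if enum I is x :: _ then \big[Num.min/F x]_(i : I) F i else 0.
Definition maxover (I : finType) (F : I -> R) : R :=
  if enum I is x :: _ then \big[Num.max/F x]_(i : I) F i else 0.

Definition util (M : finType) (u : M -> R) (A : {set M}) : R :=
  \sum_(x in A) u x.

(* ordered N-partitions (T_1,...,T_N) of M (parts may be empty) are encoded
   by assignment functions f : M -> 'I_N, with T_j = f^-1(j). *)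
Definition part (M : finType) (N : nat) (f : {ffun M -> 'I_N}) (j : 'I_N)
  : {set M} := [set x | f x == j].

Definition MmS (M : finType) (N : nat) (u : M -> R) : R :=
  maxover (fun f : {ffun M -> 'I_N} => minover (fun j : 'I_N => util u (part f j))).

Definition nonpositive (M : finType) (N : nat) (d : 'I_N -> M -> R) : Prop :=
  forall i x, d i x <= 0.

(* p is a run of the round-robin protocol: p lists all items in the order
   they are picked; the pick at (0-based) turn k is made by agent k mod N,
   and the picked item maximizes the picker's utility among the items not
   yet allocated (ties broken arbitrarily). *)
Definition round_robin_run (M : finType) (N : nat) (d : 'I_N -> M -> R)
  (p : seq M) : Prop :=
  perm_eq p (enum M) /\
  forall (s1 : seq M) (x : M) (s2 : seq M), p = s1 ++ x :: s2 ->
    forall i : 'I_N, (size s1 %% N)%N = i ->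
      forall y, y \in x :: s2 -> d i y <= d i x.

Definition rr_bundle (M : finType) (N : nat) (p : seq M) (i : 'I_N) : {set M} :=
  [set x | (index x p %% N)%N == i].

End Defs.

(** Fix agent i with utility d := d_i and write mu := MmS(d). Every item is
    worth at least mu (the part containing it is worth at most its value), and
    the whole set is worth at least N mu. When
    i picks at turn t she takes an item worth at least each of the items picked
    at turns t, ..., t + N - 1, so N times her bundle dominates the value of
    everything picked from her first turn on, up to the at most N - 1 missing
    turns after the end, each worth at least mu. The items before her first
    turn are worth at most 0, hence N d(S_i) >= d(M) + (N - 1) mu
    >= (2N - 1) mu. Equality: with N(N - 1) items of value -1 picked first
    and one item of value -N picked last, agent 1 gets N - 1 small items and
    the large one, while mu = -N. *)

From HB Require Import structures.
From mathcomp Require Import all_boot all_order all_algebra.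
From mathcomp Require Import ring lra zify.
Set Implicit Arguments.
Unset Strict Implicit.
Unset Printing Implicit Defensive.
Import Order.TTheory GRing.Theory Num.Theory.
Local Open Scope ring_scope.

Lemma modn_window_neq (N k t : nat) :
  (k < t)%N -> (t < k + N)%N -> (t %% N != k %% N)%N.
Proof.
move=> lt_kt lt_t_kN.
rewrite -(subnKC (ltnW lt_kt)) -[X in _ != (X %% N)%N]addn0 eqn_modDl mod0n.
rewrite modn_small; last by rewrite ltn_subLR // ltnW.
by rewrite subn_eq0 -ltnNge.
Qed.

Section GreedyPicks.
Variables (R : realFieldType) (N i m : nat) (b : nat -> R) (mu : R).
Hypothesis N_gt0 : (0 < N)%N.
Hypothesis mu_le0 : mu <= 0.
Hypothesis b_bounds : forall t, (t < m)%N -> mu <= b t <= 0.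
Hypothesis b_greedy :
  forall t u, (t %% N)%N = i -> (t <= u)%N -> (u < m)%N -> b u <= b t.

Lemma greedy_window_sum k n : (k %% N)%N = i -> (k + n <= m)%N ->
  \sum_(k <= t < k + n) b t <= n%:R * b k.
Proof.
move=> turn_k le_kn_m.
apply: le_trans (_ : _ <= \sum_(k <= t < k + n) b k) _; last first.
  by rewrite sumr_const_nat addKn mulr_natl.
apply: ler_sum_nat => t /andP[le_kt lt_t_kn].
by apply: b_greedy => //; apply: leq_trans lt_t_kn le_kn_m.
Qed.

Lemma no_turn_in_window k n : (k %% N)%N = i -> (n <= k + N)%N ->
  \sum_(k.+1 <= t < n | (t %% N)%N == i) b t = 0.
Proof.
move=> turn_k le_n_kN; rewrite big_nat_cond big1 // => t.
case/andP=> /andP[lt_kt lt_tn] /eqP; rewrite -turn_k => /eqP.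
by rewrite (negbTE (modn_window_neq lt_kt (leq_trans lt_tn le_n_kN))).
Qed.

Lemma greedy_turns_sum k :
  \sum_(k <= t < m) b t + (N - 1)%:R * mu <=
  N%:R * \sum_(k <= t < m | (t %% N)%N == i) b t.
Proof.
have [n] := ubnP (m - k); elim: n k => // n IH k lt_mk_n.
have [le_mk|lt_km] := leqP m k.
  by rewrite !big_geq // mulr0 add0r mulr_ge0_le0 // ler0n.
have IH_from k' : (k < k')%N ->
    \sum_(k' <= t < m) b t + (N - 1)%:R * mu <=
    N%:R * \sum_(k' <= t < m | (t %% N)%N == i) b t.
  move=> lt_kk'; apply: IH; apply: leq_trans (ltn_sub2l lt_km lt_kk') _.
  by rewrite -ltnS.
have /andP[mu_bk bk_le0] := b_bounds lt_km.
have [turn_k|not_turn] := eqVneq (k %% N)%N i; last first.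
  rewrite [X in _ <= _ * X]big_ltn_cond // big_ltn // (negbTE not_turn).
  have := IH_from k.+1 (ltnSn k); lra.
rewrite [X in _ <= _ * X]big_ltn_cond // turn_k eqxx.
have [le_kN_m|lt_m_kN] := leqP (k + N) m.
- have lt_k_kN : (k < k + N)%N by rewrite -[X in (X < _)%N]addn0 ltn_add2l.
  rewrite (big_cat_nat (ltnW lt_k_kN) le_kN_m) (big_cat_nat lt_k_kN le_kN_m) /=.
  rewrite no_turn_in_window // add0r mulrDr -addrA.
  by apply: lerD; [exact: greedy_window_sum | exact: IH_from].
- rewrite (no_turn_in_window turn_k (ltnW lt_m_kN)) addr0.
  have window : \sum_(k <= t < m) b t <= (m - k)%:R * b k.
    move: (@greedy_window_sum k (m - k) turn_k).
    by rewrite (subnKC (ltnW lt_km)); apply.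
  (* the N - (m - k) missing turns after the end are paid for by mu <= b k *)
  have missing : (N - 1)%:R * mu <= (N - (m - k))%:R * b k.
    apply: le_trans (_ : _ <= (N - (m - k))%:R * mu) _.
      by apply: ler_wnM2r => //; rewrite ler_nat leq_sub2l // subn_gt0.
    by rewrite ler_wpM2l ?ler0n.
  have -> : N%:R * b k = (m - k)%:R * b k + (N - (m - k))%:R * b k.
    by rewrite -mulrDl -natrD subnKC // leq_subLR ltnW.
  exact: lerD.
Qed.

End GreedyPicks.

Section Extrema.
Variable R : realFieldType.

Lemma minover_le (I : finType) (F : I -> R) j : minover F <= F j.
Proof.
rewrite /minover; case E: (enum I) => [|x s]; last exact: bigmin_le.
by have := mem_enum I j; rewrite E.
Qed.

Lemma le_minover (I : finType) (F : I -> R) b (j : I) :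
  (forall i, b <= F i) -> b <= minover F.
Proof.
move=> le_bF; rewrite /minover; case E: (enum I) => [|x s]; last exact: le_bigmin.
by have := mem_enum I j; rewrite E.
Qed.

Lemma maxover_le (I : finType) (F : I -> R) b (j : I) :
  (forall i, F i <= b) -> maxover F <= b.
Proof.
move=> le_Fb; rewrite /maxover; case E: (enum I) => [|x s]; last exact: bigmax_le.
by have := mem_enum I j; rewrite E.
Qed.

Lemma le_maxover (I : finType) (F : I -> R) j : F j <= maxover F.
Proof.
rewrite /maxover; case E: (enum I) => [|x s]; last exact: le_bigmax.
by have := mem_enum I j; rewrite E.
Qed.

End Extrema.

Section MaximinShare.
Variables (R : realFieldType) (M : finType) (u : M -> R).
Hypothesis u_le0 : forall x, u x <= 0.

Lemma util_le_subset (A B : {set M}) : A \subset B -> util u B <= util u A.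
Proof.
move=> sAB; rewrite /util (big_setID A) /= (setIidPr sAB) gerDl.
exact: sumr_le0.
Qed.

Lemma MmS_le_item (N : nat) x : (0 < N)%N -> MmS N u <= u x.
Proof.
move=> N_gt0; apply: (@maxover_le _ _ _ _ [ffun=> Ordinal N_gt0]) => f.
apply: le_trans (minover_le _ (f x)) _.
have x_part : [set x] \subset part f (f x) by rewrite sub1set inE.
by apply: le_trans (util_le_subset x_part) _; rewrite /util big_set1.
Qed.

End MaximinShare.

Lemma MmS_le_avg (R : realFieldType) (M : finType) (N : nat) (u : M -> R) :
  (0 < N)%N -> N%:R * MmS N u <= \sum_x u x.
Proof.
move=> N_gt0; have N_gt0' : 0 < N%:R :> R by rewrite ltr0n.
rewrite mulrC -ler_pdivlMr //.
apply: (@maxover_le _ _ _ _ [ffun=> Ordinal N_gt0]) => f.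
rewrite ler_pdivlMr // mulrC.
have -> : \sum_x u x = \sum_(j < N) util u (part f j).
  rewrite (partition_big (fun x => f x) xpredT) //=.
  by apply: eq_bigr => j _; apply: eq_bigl => x; rewrite inE.
set worst := minover _.
have -> : N%:R * worst = \sum_(j < N) worst by rewrite sumr_const card_ord mulr_natl.
by apply: ler_sum => j _; apply: minover_le.
Qed.

Lemma sum_index_nth (R : realFieldType) (M : finType) (p : seq M) (x0 : M)
    (P : pred nat) (F : M -> R) :
  perm_eq p (enum M) ->
  \sum_(x | P (index x p)) F x = \sum_(0 <= t < size p | P t) F (nth x0 p t).
Proof.
move=> p_enum; have p_uniq : uniq p by rewrite (perm_uniq p_enum) enum_uniq.
have -> : \sum_(x | P (index x p)) F x = \sum_(x <- enum M | P (index x p)) F x.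
  by rewrite big_enum_cond; apply: eq_bigl => x; rewrite inE.
rewrite -(perm_big _ p_enum) (big_nth x0) big_nat_cond [RHS]big_nat_cond.
apply: eq_bigl => t; case t_ok: (0 <= t < size p)%N => //=.
by rewrite index_uniq //; case/andP: t_ok.
Qed.

Lemma round_robin_run_greedy (R : realFieldType) (M : finType) (N : nat)
    (d : 'I_N -> M -> R) (p : seq M) (x0 : M) (i : 'I_N) t u :
  round_robin_run d p -> (t %% N)%N = i -> (t <= u)%N -> (u < size p)%N ->
  d i (nth x0 p u) <= d i (nth x0 p t).
Proof.
move=> [_ greedy] turn_t le_tu lt_u_p.
have lt_t_p : (t < size p)%N by exact: leq_ltn_trans le_tu lt_u_p.
have p_split : p = take t p ++ nth x0 p t :: drop t.+1 p.
  by rewrite -drop_nth // cat_take_drop.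
apply: (greedy _ _ _ p_split i); first by rewrite size_take lt_t_p.
rewrite -drop_nth // (_ : nth x0 p u = nth x0 (drop t p) (u - t)).
  by apply: mem_nth; rewrite size_drop ltn_sub2r.
by rewrite nth_drop subnKC.
Qed.

Lemma round_robin_MmS_bound (R : realFieldType) (M : finType) (N : nat)
    (d : 'I_N -> M -> R) (p : seq M) :
  (0 < N)%N -> (0 < #|M|)%N -> nonpositive d -> round_robin_run d p ->
  forall i : 'I_N, (2 - (N%:R)^-1) * MmS N (d i) <= util (d i) (rr_bundle p i).
Proof.
move=> N_gt0 /card_gt0P[x0 _] d_le0 run i.
have [p_enum _] := run.
set mu := MmS N (d i); set b := fun t => d i (nth x0 p t).
have mu_le := fun x => MmS_le_item (d_le0 i) x N_gt0.
have bundleE : util (d i) (rr_bundle p i) =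
               \sum_(0 <= t < size p | (t %% N)%N == i) b t.
  rewrite /util -(sum_index_nth x0 (fun t => (t %% N)%N == i)) //.
  by apply: eq_bigl => x; rewrite inE.
have totalE : \sum_x d i x = \sum_(0 <= t < size p) b t.
  by rewrite -(sum_index_nth x0 xpredT).
have turns : \sum_(0 <= t < size p) b t + (N - 1)%:R * mu <=
             N%:R * \sum_(0 <= t < size p | (t %% N)%N == i) b t.
  apply: greedy_turns_sum => //; first exact: le_trans (mu_le x0) (d_le0 i x0).
    by move=> t _; rewrite mu_le d_le0.
  by move=> t u; apply: round_robin_run_greedy.
have avg : N%:R * mu <= \sum_(0 <= t < size p) b t by rewrite -totalE MmS_le_avg.
have N_gt0' : 0 < N%:R :> R by rewrite ltr0n.
rewrite bundleE -(ler_pM2l N_gt0') mulrA mulrBr mulfV ?gt_eqF //.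
rewrite natrB // in turns; lra.
Qed.

Section TightInstance.
Context {R : realFieldType} (n : nat).

Local Notation tight_item := (option 'I_(n * n.+1)).

Definition tight_disutility (_ : 'I_n.+1) (x : tight_item) : R :=
  if x is Some _ then -1 else - n.+1%:R.

Definition tight_run : seq tight_item := map Some (enum 'I_(n * n.+1)) ++ [:: None].

Lemma tight_run_uniq : uniq tight_run.
Proof.
rewrite cat_uniq (map_inj_uniq (@Some_inj _)) enum_uniq /= andbT orbF.
by apply/mapP => -[].
Qed.

Lemma tight_run_perm : perm_eq tight_run (enum {: tight_item}).
Proof.
apply: uniq_perm; [exact: tight_run_uniq | exact: enum_uniq |] => x.
rewrite mem_enum mem_cat; case: x => [x|]; last by rewrite mem_head orbT.
by rewrite map_f ?mem_enum.
Qed.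

Lemma tight_nonpositive : nonpositive tight_disutility.
Proof. by move=> j [x|]; rewrite /tight_disutility ?lerN10 // oppr_le0 ler0n. Qed.

Lemma tight_round_robin_run : round_robin_run tight_disutility tight_run.
Proof.
split; first exact: tight_run_perm.
move=> s1 [x|] s2 run_split j _ y y_rest.
  by case: y {y_rest} => [y|]; rewrite /tight_disutility ?lexx // lerN2 ler1n.
(* the large item None is picked last, so nothing is left after it *)
case: s2 run_split y_rest => [|z s2] run_split.
  by rewrite mem_seq1 => /eqP ->.
have := tight_run_uniq; rewrite run_split cat_uniq /=.
case/and3P=> _ _ /andP[None_notin _].
have : last None tight_run = None by rewrite last_cat.
rewrite run_split last_cat /= => last_z.
by have := mem_last z s2; rewrite last_z (negbTE None_notin).
Qed.

Definition tight_partition : {ffun tight_item -> 'I_n.+1} :=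
  [ffun x : tight_item => if x is Some t then inord (t %/ n.+1) else ord_max].

Lemma tight_partition_Some (t : 'I_(n * n.+1)) :
  tight_partition (Some t) = (t %/ n.+1)%N :> nat.
Proof. by rewrite ffunE inordK // ltnS ltnW // ltn_divLR. Qed.

Lemma tight_part_ge (i j : 'I_n.+1) :
  - n.+1%:R <= util (tight_disutility i) (part tight_partition j).
Proof.
have d_le0 := tight_nonpositive i.
have [lt_jn|le_nj] := ltnP j n; last first.
  have sub : part tight_partition j \subset [set None].
    apply/subsetP => -[t|]; rewrite !inE // => /eqP part_t.
    have := ltn_ord t.
    by rewrite -ltn_divLR // -tight_partition_Some part_t ltnNge le_nj.
  by apply: le_trans (util_le_subset d_le0 sub); rewrite /util big_set1.
have block_lt (r : 'I_n.+1) : (j * n.+1 + r < n * n.+1)%N.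
  by move: (ltn_ord r) lt_jn; nia.
pose block r := Some (Ordinal (block_lt r)).
have sub : part tight_partition j \subset [set block r | r : 'I_n.+1].
  apply/subsetP => -[t|]; rewrite inE => /eqP part_t; last first.
    by move: lt_jn; rewrite -part_t ffunE ltnn.
  apply/imsetP; exists (Ordinal (ltn_pmod t (ltn0Sn n))) => //.
  congr Some; apply: val_inj => /=.
  by rewrite [LHS](divn_eq t n.+1) -tight_partition_Some part_t.
apply: le_trans (util_le_subset d_le0 sub).
rewrite /util big_imset /=; last by move=> r1 r2 _ _ [] /addnI /val_inj.
by rewrite sumr_const card_ord -mulNrn.
Qed.

Lemma tight_MmS (i : 'I_n.+1) : MmS n.+1 (tight_disutility i) = - n.+1%:R.
Proof.
apply/le_anti/andP; split.
  exact: (MmS_le_item (tight_nonpositive i) None (ltn0Sn n)).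
apply: le_trans (le_maxover _ tight_partition).
exact: le_minover ord0 (tight_part_ge i).
Qed.

Lemma tight_bundle_le :
  util (tight_disutility ord0) (rr_bundle tight_run (ord0 : 'I_n.+1)) <=
  - n.+1%:R - n%:R.
Proof.
have first_in_round (k : 'I_n) : (k * n.+1 < n * n.+1)%N by rewrite ltn_pmul2r.
pose first_pick k := Some (Ordinal (first_in_round k)).
have sub : None |: [set first_pick k | k : 'I_n] \subset
           rr_bundle tight_run (ord0 : 'I_n.+1).
  apply/subsetP => x; rewrite !inE; case/orP => [/eqP ->|/imsetP[k _ ->]].
    rewrite index_cat ifF; last by apply/mapP => -[].
    by rewrite size_map size_enum_ord /= addn0 modnMl.
  rewrite index_cat /first_pick map_f ?mem_enum // index_map; last exact: Some_inj.
  by rewrite index_enum_ord /= modnMl.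
apply: le_trans (util_le_subset (tight_nonpositive ord0) sub) _.
rewrite /util big_setU1 /=; last by apply/imsetP => -[].
rewrite big_imset /=; last first.
  by move=> k1 k2 _ _ [] /eqP; rewrite eqn_pmul2r // => /eqP /val_inj.
by rewrite sumr_const card_ord mulNrn.
Qed.

End TightInstance.

Lemma round_robin_bound_tight (R : realFieldType) (N : nat) : (0 < N)%N ->
  exists (M : finType) (d : 'I_N -> M -> R) (p : seq M) (i : 'I_N),
    [/\ (0 < #|M|)%N, nonpositive d, round_robin_run d p,
        MmS N (d i) < 0 &
        util (d i) (rr_bundle p i) = (2 - (N%:R)^-1) * MmS N (d i)].
Proof.
case: N => // n _.
have items_gt0 : (0 < #|{: option 'I_(n * n.+1)}|)%N.
  by apply/card_gt0P; exists None.
have run := tight_round_robin_run (R := R) n.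
have bound_eq : (2 - n.+1%:R^-1) * - n.+1%:R = - n.+1%:R - n%:R :> R.
  by rewrite mulrN mulrBl mulVf ?pnatr_eq0 // -natr1; ring.
have lower :=
  round_robin_MmS_bound (ltn0Sn n) items_gt0 (@tight_nonpositive R n) run ord0.
exists (option 'I_(n * n.+1)), (@tight_disutility R n), (tight_run n), ord0.
rewrite tight_MmS bound_eq in lower *; split => //.
- exact: tight_nonpositive.
- by rewrite oppr_lt0 ltr0n.
- by apply/le_anti; rewrite lower tight_bundle_le.
Qed.

Theorem theorem1 (R : realFieldType) :
  (forall (M : finType) (N : nat) (d : 'I_N -> M -> R) (p : seq M),
     (0 < N)%N -> (0 < #|M|)%N -> nonpositive d -> round_robin_run d p ->
     forall i : 'I_N,
       (2 - (N%:R)^-1) * MmS N (d i) <= util (d i) (rr_bundle p i))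
  /\
  (forall N : nat, (0 < N)%N ->
     exists (M : finType) (d : 'I_N -> M -> R) (p : seq M) (i : 'I_N),
       [/\ (0 < #|M|)%N, nonpositive d, round_robin_run d p,
           MmS N (d i) < 0 &
           util (d i) (rr_bundle p i) = (2 - (N%:R)^-1) * MmS N (d i)]).
Proof.
split; [exact: round_robin_MmS_bound | exact: round_robin_bound_tight].
Qed.
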